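(* Let $n\in\mathbb N$, and let $P(z)=\sum_{j\ge0}p_jz^j$ with $p_j\ge0$ for all $j\ge0$, $P(1)=1$ and $P'(1)\in(0,1)$. Let $r>1$ be such that $r>P(r)$ (in particular $P(r)<\infty$). Let $\xi_j=\exp(2\pi\mathbf i j/n)$, $j=1,\dots,n$, and let $C_{P,r}^{(n)}=(c_{hj})_{h,j=1}^n$ be the $n\times n$ matrix with $c_{hj}=(r\xi_h-P(r\xi_j))^{-1}$. Then for all $k=1,\dots,n-1$, $$\sigma_{k+1}\big(C_{P,r}^{(n)}\big)\le\frac{\theta^k\,n}{(1-\theta)(r-p_0)},\qquad\text{where }\theta:=\frac{P(r)-p_0}{r-p_0}\in(0,1),$$ and $\sigma_1\ge\sigma_2\ge\dots$ denote the singular values. *)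

From HB Require Import structures.
From mathcomp Require Import all_boot all_order all_algebra.
From mathcomp Require Import all_classical all_reals all_analysis.
From mathcomp Require Import complex.
From Stdlib Require Import ClassicalEpsilon.
Set Implicit Arguments. Unset Strict Implicit. Unset Printing Implicit Defensive.
Import Order.TTheory GRing.Theory Num.Theory.
Import numFieldNormedType.Exports.
Local Open Scope ring_scope.
Local Open Scope complex_scope.

Definition ssum (R : realType) (u : nat -> R) : R := limn (series u).

Definition Pser (R : realType) (p : nat -> R) (x : R) : R :=
  ssum (fun j => p j * x ^+ j).

(** P(r e^{i t}) = sum_j p_j r^j e^{i j t}, written via its real and imaginary parts. *)
Definition PserC (R : realType) (p : nat -> R) (r t : R) : R[i] :=
  (ssum (fun j => p j * r ^+ j * cos (j%:R * t)))
  +i* (ssum (fun j => p j * r ^+ j * sin (j%:R * t))).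

Definition ang (R : realType) (n j : nat) : R := 2 * pi * j%:R / n%:R.

Definition xi (R : realType) (n j : nat) : R[i] := cos (ang R n j) +i* sin (ang R n j).

(** The n x n matrix C_{P,r}^{(n)}, entries c_{hj} = (r xi_h - P(r xi_j))^{-1},
    h, j = 1..n (the ordinal h : 'I_n stands for the index h+1). *)
Definition CPr (R : realType) (p : nat -> R) (r : R) (n : nat) : 'M[R[i]]_n :=
  \matrix_(h < n, j < n) (r%:C * xi R n h.+1 - PserC p r (ang R n j.+1))^-1.

Definition adjmx (R : realType) (m n : nat) (A : 'M[R[i]]_(m, n)) : 'M[R[i]]_(n, m) :=
  map_mx (fun z => z^*) A^T.

Definition is_singular_values (R : realType) (n : nat) (A : 'M[R[i]]_n) (s : seq R) :=
  [/\ size s = n, sorted >=%R s, all (fun x => 0 <= x) s &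
      char_poly (adjmx A *m A) = \prod_(x <- s) ('X - ((x ^+ 2)%:C)%:P)].

Definition singular_values (R : realType) (n : nat) (A : 'M[R[i]]_n) : seq R :=
  epsilon (inhabits [::]) (is_singular_values A).

(** sigma A i = the (i+1)-th largest singular value sigma_{i+1}(A). *)
Definition sigma (R : realType) (n : nat) (A : 'M[R[i]]_n) (i : nat) : R :=
  nth 0 (singular_values A) i.

From HB Require Import structures.
From mathcomp Require Import all_boot all_order all_algebra.
From mathcomp Require Import all_classical all_reals all_analysis.
From mathcomp Require Import complex.
From mathcomp Require Import ring lra zify.
From Stdlib Require Import ClassicalEpsilon.
Import Order.TTheory GRing.Theory Num.Theory.
Import numFieldNormedType.Exports.
Set Implicit Arguments. Unset Strict Implicit. Unset Printing Implicit Defensive.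
Local Open Scope ring_scope.
Local Open Scope classical_set_scope.

(* With a_h = r xi_h - p_0 and q_j = P(r xi_j) - p_0 we have c_hj = (a_h - q_j)^-1,
   |a_h| >= r - p_0 and, the p_j being nonnegative, |q_j| <= P(r) - p_0.  Truncating
   1/(a - q) = sum_(l < k) q^l / a^(l+1) + (q/a)^k / (a - q) writes C as a matrix B of
   rank <= k plus an error whose entries are at most e = theta^k / ((1 - theta)(r - p_0)).
   Such an approximation forces sigma_(k+1) <= n e: the eigenvectors of the k+1 largest
   eigenvalues of the Gram matrix span a space meeting the kernel of B, and a vector v in
   it satisfies sigma_(k+1) |v| <= |v A| = |v (A - B)| <= n e |v|. *)

Lemma sqr_sum_le_card (R : numDomainType) n (a : 'I_n -> R) :
  (forall j, 0 <= a j) -> (\sum_j a j) ^+ 2 <= n%:R * \sum_j a j ^+ 2.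
Proof.
move=> a_ge0; rewrite -(ler_pM2l (_ : (0 : R) < 2)) //.
have -> : 2 * (n%:R * \sum_j a j ^+ 2) = \sum_i \sum_j (a i ^+ 2 + a j ^+ 2).
  under [RHS]eq_bigr do rewrite big_split /= sumr_const card_ord.
  rewrite big_split /= sumr_const card_ord sumrMnl -mulrnDl -mulr_natl.
  by rewrite -mulr_natl; ring.
rewrite expr2 mulr_suml mulr_sumr; apply: ler_sum => i _.
rewrite !mulr_sumr; apply: ler_sum => j _; rewrite mulr_natl.
by apply: real_leif_mean_square_scaled; rewrite ger0_real.
Qed.

Section DotmxBounds.
Variable C : numClosedFieldType.

Lemma dotmx_sqr_norm n (v : 'rV[C]_n) : dotmx v v = \sum_j `|v 0 j| ^+ 2.
Proof. by rewrite dotmxE mxE; apply: eq_bigr => j _; rewrite !mxE normCK. Qed.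

Lemma dotmx_mulmx_le n (u : 'rV[C]_n) (E : 'M[C]_n) (e : C) :
  (forall i j, `|E i j| <= e) -> dotmx (u *m E) (u *m E) <= (n%:R * e) ^+ 2 * dotmx u u.
Proof.
move=> E_le; rewrite !dotmx_sqr_norm.
have entry_le h : `|(u *m E) 0 h| <= e * \sum_j `|u 0 j|.
  rewrite mxE mulr_sumr; apply: le_trans (ler_norm_sum _ _ _) _.
  by apply: ler_sum => j _; rewrite normrM mulrC ler_wpM2r.
have sqr_entry_le h : `|(u *m E) 0 h| ^+ 2 <= e ^+ 2 * (n%:R * \sum_j `|u 0 j| ^+ 2).
  have e_ge0 : 0 <= e := le_trans (normr_ge0 _) (E_le h h).
  apply: le_trans (_ : (e * \sum_j `|u 0 j|) ^+ 2 <= _).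
    by rewrite lerXn2r ?nnegrE ?mulr_ge0 ?sumr_ge0.
  by rewrite exprMn ler_wpM2l ?exprn_ge0 ?sqr_sum_le_card.
rewrite [leRHS](_ : _ = \sum_(h < n) e ^+ 2 * (n%:R * \sum_j `|u 0 j| ^+ 2)).
  exact: ler_sum.
by rewrite sumr_const card_ord -mulr_natl; ring.
Qed.

Lemma dotmx_unitary n (P : 'M[C]_n) (c : 'rV[C]_n) :
  P \is unitarymx -> dotmx (c *m P) (c *m P) = dotmx c c.
Proof.
by move=> /unitarymxP PP; rewrite !dotmxE trmx_mul map_mxM mulmxA -(mulmxA c) PP mulmx1.
Qed.

End DotmxBounds.

Lemma sorted_ge_count_nth disp (T : porderType disp) (x0 : T) (s : seq T) k :
  sorted >=%O s -> (k < size s)%N -> (k < count (>= nth x0 s k)%O s)%N.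
Proof.
move=> s_sorted ks; set t := nth x0 s k.
rewrite -(cat_take_drop k.+1 s) count_cat.
suff : all (>= t)%O (take k.+1 s).
  by rewrite all_count => /eqP ->; rewrite size_takel ?leq_addr.
apply/(all_nthP x0) => i; rewrite size_takel // => ik; rewrite nth_take //=.
apply: (sorted_leq_nth (leT := >=%O)) => //; rewrite ?inE //.
- by move=> y x z xy yz; exact: le_trans yz xy.
- by move=> x; exact: lexx.
- exact: leq_trans ik ks.
Qed.

Lemma capmx_kermx_neq0 (F : fieldType) m n p (W : 'M[F]_(m, n)) (B : 'M[F]_(n, p)) :
  (\rank B < \rank W)%N -> (W :&: kermx B != 0)%MS.
Proof.
move=> rBW; rewrite -mxrank_eq0 -lt0n.
have := mxrank_sum_cap W (kermx B); rewrite mxrank_ker.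
have := rank_leq_col (W + kermx B)%MS; have := rank_leq_col B; lia.
Qed.

Lemma mxrank_sum_delta (F : fieldType) n (P : pred 'I_n) :
  \rank (\sum_(i | P i) <<delta_mx 0 i : 'rV[F]_n>>)%MS = #|P|.
Proof.
have := @mxdirect_delta F _ P n id (fun i j _ _ => id).
move/mxdirectP => /= ->; rewrite -sum1_card.
by apply: eq_bigr => i _; rewrite mxrank_gen mxrank_delta.
Qed.

Lemma submx_sum_delta_coord0 (F : fieldType) n (P : pred 'I_n) (v : 'rV[F]_n) j :
  (v <= \sum_(i | P i) <<delta_mx 0 i : 'rV[F]_n>>)%MS -> ~~ P j -> v 0 j = 0.
Proof.
move=> vP Pj; have sumP_sub : (\sum_(i | P i) <<delta_mx 0 i : 'rV[F]_n>>
    <= kermx (delta_mx j 0 : 'cV[F]_n))%MS.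
  apply/sumsmx_subP => i Pi; rewrite genmxE; apply/sub_kermxP; rewrite -colE.
  apply/rowP => z; rewrite !mxE (_ : j == i = false) ?andbF //.
  by apply: contraNF Pj => /eqP ->.
have /sub_kermxP := submx_trans vP sumP_sub.
by rewrite -colE => /rowP /(_ 0); rewrite !mxE.
Qed.

Lemma eq_prod_XsubC_perm (F : idomainType) (s1 s2 : seq F) :
  \prod_(x <- s1) ('X - x%:P) = \prod_(x <- s2) ('X - x%:P) -> perm_eq s1 s2.
Proof.
elim: s1 s2 => [|x s1 IH] s2 /=.
  move=> /(congr1 (size : {poly F} -> nat)).
  by rewrite big_nil size_poly1 size_prod_XsubC; case: s2.
rewrite big_cons => E.
have xs2 : x \in s2 by rewrite -root_prod_XsubC -E rootM root_XsubC eqxx.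
have s2_rem := perm_to_rem xs2.
move: E; rewrite (perm_big _ s2_rem) /= big_cons => /(mulfI (negbT (polyXsubC_eq0 x))) E.
by rewrite perm_sym (permPl s2_rem) perm_cons perm_sym; exact: IH.
Qed.

Lemma char_poly_similar (F : fieldType) n (P D : 'M[F]_n) : P \in unitmx ->
  char_poly (invmx P *m D *m P) = char_poly D.
Proof.
move=> Pu; set mP := map_mx polyC P; set mQ := map_mx polyC (invmx P).
have QP : mQ *m mP = 1%:M by rewrite -map_mxM mulVmx // map_mx1.
rewrite /char_poly; have -> : char_poly_mx (invmx P *m D *m P) = mQ *m char_poly_mx D *m mP.
  rewrite /char_poly_mx !map_mxM -/mP -/mQ mulmxBr mulmxBl.
  by rewrite -mulmxA scalar_mxC -mulmxA QP mulmx1.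
rewrite !det_mulmx mulrC mulrA /mP /mQ !det_map_mx -rmorphM.
by rewrite -det_mulmx mulmxV // det1 rmorph1 mul1r.
Qed.

Section GramSpectral.
Variables (C : numClosedFieldType) (n : nat) (X : 'M[C]_n).
Local Open Scope sesquilinear_scope.
Let M := X *m X ^t*.
Let U := spectralmx M.
Let d := spectral_diag M.

Lemma gram_spectral_decomp : M = U ^t* *m diag_mx d *m U.
Proof.
have /orthomx_spectralP : M \is normalmx by apply/eqP; rewrite /M trmx_mul map_mxM trmxCK.
by rewrite invmx_unitary ?spectral_unitarymx.
Qed.

Lemma dotmx_gram_spectral (c : 'rV[C]_n) :
  dotmx (c *m U *m X) (c *m U *m X) = \sum_j d 0 j * `|c 0 j| ^+ 2.
Proof.
have /unitarymxP UU := spectral_unitarymx M.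
have -> : dotmx (c *m U *m X) (c *m U *m X) = (c *m diag_mx d *m c ^t* ) 0 0.
  rewrite dotmxE !trmx_mul !map_mxM -!mulmxA (mulmxA X) -/M gram_spectral_decomp.
  by rewrite !mulmxA -[c *m U *m U ^t*]mulmxA UU mulmx1 -[_ *m U *m U ^t*]mulmxA UU mulmx1.
rewrite mxE; apply: eq_bigr => j _.
by rewrite mul_mx_diag !mxE normCK mulrA [_ * d 0 j]mulrC.
Qed.

Lemma gram_spectral_diag_ge0 i : 0 <= d 0 i.
Proof.
have := (dnorm_ge0 (@dotmx C n) (delta_mx 0 i *m U *m X) : 0 <= dotmx _ _).
rewrite dotmx_gram_spectral (bigD1 i) //= big1 ?addr0.
  by rewrite mxE !eqxx normr1 expr1n mulr1.
by move=> j ji; rewrite mxE (negbTE ji) andbF normr0 expr0n mulr0.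
Qed.

Lemma char_poly_gram : char_poly M = \prod_(i < n) ('X - (d 0 i)%:P).
Proof.
rewrite gram_spectral_decomp -invmx_unitary ?spectral_unitarymx //.
rewrite char_poly_similar ?spectral_unit // char_poly_trig ?diag_mx_is_trig //.
by apply: eq_bigr => i _; rewrite mxE eqxx mulr1n.
Qed.

End GramSpectral.

Section SingularValues.
Variables (R : realType) (n : nat) (X : 'M[R[i]]_n).
Local Open Scope sesquilinear_scope.
Local Open Scope complex_scope.
Let M := X *m X ^t*.
Let d := spectral_diag M.

Lemma gram_singular_values_exist : exists s : seq R,
  [/\ size s = n, sorted >=%R s, all (fun x => 0 <= x) s &
      char_poly M = \prod_(x <- s) ('X - ((x ^+ 2)%:C)%:P)].
Proof.
exists (sort >=%R [seq Num.sqrt (complex.Re (d 0 i)) | i <- enum 'I_n]); split.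
- by rewrite size_sort size_map size_enum_ord.
- by apply: sort_sorted => x y; rewrite orbC; exact: le_total.
- by rewrite all_sort; apply/allP => x /mapP [i _ ->]; exact: sqrtr_ge0.
rewrite char_poly_gram (perm_big _ (permEl (perm_sort _ _))) big_map /= big_enum /=.
apply: eq_bigr => i _; have := gram_spectral_diag_ge0 X i; rewrite -/M -/d.
by case: (d 0 i) => a b; rewrite lecE /= => /andP[/eqP -> a_ge0]; rewrite sqr_sqrtr.
Qed.

Lemma gram_eigen_count (s : seq R) k :
  sorted >=%R s -> all (fun x => 0 <= x) s ->
  char_poly M = \prod_(x <- s) ('X - ((x ^+ 2)%:C)%:P) -> (k < size s)%N ->
  (k < #|[pred i | ((nth 0 s k ^+ 2)%:C <= d 0 i)%R]|)%N.
Proof.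
move=> s_sorted s_ge0 charM ks.
have d_perm : perm_eq [seq d 0 i | i <- index_enum 'I_n] [seq (y ^+ 2)%:C | y <- s].
  by apply: eq_prod_XsubC_perm; rewrite !big_map -charM char_poly_gram.
rewrite -sum1_card sum1_count.
rewrite -[count _ _](count_map (d 0) (fun z => (nth 0 s k ^+ 2)%:C <= z)) (permP d_perm).
rewrite count_map (@eq_in_count _ _ (>= nth 0 s k)%R) ?sorted_ge_count_nth //.
move=> y y_s /=; rewrite lecR ler_sqr ?nnegrE //; apply: (allP s_ge0) => //; exact: mem_nth.
Qed.

Lemma gram_singular_value_le (s : seq R) k (Y : 'M[R[i]]_n) (e : R) :
  sorted >=%R s -> all (fun x => 0 <= x) s ->
  char_poly M = \prod_(x <- s) ('X - ((x ^+ 2)%:C)%:P) -> (k < size s)%N ->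
  (\rank Y <= k)%N -> (forall i j, `|X i j - Y i j| <= e%:C) ->
  nth 0 s k <= n%:R * e.
Proof.
move=> s_sorted s_ge0 charM ks rankY XY_le.
set t := nth 0 s k; set U := spectralmx M.
pose P := [pred i | ((t ^+ 2)%:C <= d 0 i)%R].
pose W := (\sum_(i | P i) <<delta_mx 0 i : 'rV[R[i]]_n>>)%MS.
have k_lt_P : (k < #|P|)%N by exact: gram_eigen_count.
have : (W :&: kermx (U *m Y) != 0)%MS.
  apply: capmx_kermx_neq0; rewrite mxrank_sum_delta.
  exact: leq_ltn_trans (mxrankM_maxr _ _) (leq_ltn_trans rankY k_lt_P).
case/rowV0Pn => v; rewrite sub_capmx => /andP[vW vK] v_neq0.
have vUY0 : v *m (U *m Y) = 0 by apply/sub_kermxP.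
have lower : (t ^+ 2)%:C * dotmx v v <= dotmx (v *m U *m X) (v *m U *m X).
  rewrite dotmx_gram_spectral dotmx_sqr_norm mulr_sumr; apply: ler_sum => j _.
  have [Pj|nPj] := boolP (P j); first by rewrite ler_wpM2r // exprn_ge0.
  by rewrite (submx_sum_delta_coord0 vW) // normr0 expr0n /= !mulr0.
have upper : dotmx (v *m U *m X) (v *m U *m X) <= (n%:R * e%:C) ^+ 2 * dotmx v v.
  have -> : v *m U *m X = v *m U *m (X - Y) by rewrite mulmxBr -(mulmxA v U Y) vUY0 subr0.
  rewrite -(dotmx_unitary v (spectral_unitarymx M)) dotmx_mulmx_le // => i j.
  by rewrite !mxE.
have v_pos : 0 < dotmx v v by rewrite (dnorm_gt0 (@dotmx _ n)).
have := le_trans lower upper; rewrite ler_pM2r //.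
rewrite -(rmorph_nat (real_complex R)) -rmorphM -rmorphXn lecR => sqr_le.
have n_gt0 : (0 < n)%N.
  by rewrite -[n]card_ord (leq_ltn_trans _ (leq_trans k_lt_P (max_card _))).
have := XY_le (Ordinal n_gt0) (Ordinal n_gt0).
move=> /(le_trans (normr_ge0 _)); rewrite ler0c => e_ge0.
have t_ge0 : 0 <= t by apply: (allP s_ge0); rewrite mem_nth.
by rewrite -ler_sqr ?nnegrE ?mulr_ge0.
Qed.

End SingularValues.

Section SingularValueBound.
Variable R : realType.
Local Open Scope sesquilinear_scope.
Local Open Scope complex_scope.

Lemma singular_values_spec n (A : 'M[R[i]]_n) : is_singular_values A (singular_values A).
Proof.
apply: epsilon_spec.
have [s [size_s sorted_s s_ge0 charM]] := gram_singular_values_exist (A ^t*).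
by exists s; split; rewrite // -charM trmxCK.
Qed.

Lemma sigma_le_rank_approx n (A B : 'M[R[i]]_n) k (e : R) :
  (k < n)%N -> (\rank B <= k)%N -> (forall i j, `|A i j - B i j| <= e%:C) ->
  sigma A k <= n%:R * e.
Proof.
move=> kn rankB AB_le; have [size_s sorted_s s_ge0 charM] := singular_values_spec A.
(* The Gram matrix of A ^t* is adjmx A *m A, whose eigenvalues define sigma A. *)
apply: (gram_singular_value_le (X := A ^t*) (Y := B ^t*)); rewrite ?size_s ?trmxCK //.
  by rewrite mxrank_map mxrank_tr.
by move=> i j; rewrite !mxE -rmorphB norm_conjC.
Qed.

End SingularValueBound.

Lemma invfB_geometric (F : fieldType) (a q : F) k : a != 0 -> a != q ->
  (a - q)^-1 = \sum_(l < k) q ^+ l / a ^+ l.+1 + (q / a) ^+ k / (a - q).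
Proof.
move=> a_neq0 a_neq_q; have aq_neq0 : a - q != 0 by rewrite subr_eq0.
elim: k => [|k IHk]; first by rewrite big_ord0 add0r expr0 mul1r.
rewrite big_ord_recr /= -addrA {1}IHk; congr (_ + _).
by rewrite !exprS expr_div_n; field; rewrite aq_neq0 a_neq0 expf_neq0.
Qed.

Lemma cauchy_mx_low_rank (F : numFieldType) m n k (a : 'I_m -> F) (q : 'I_n -> F)
    (rho Q : F) :
  (forall h, rho <= `|a h|) -> (forall j, `|q j| <= Q) -> Q < rho ->
  exists2 B : 'M[F]_(m, n), (\rank B <= k)%N &
    forall h j, `|(a h - q j)^-1 - B h j| <= (Q / rho) ^+ k / (rho - Q).
Proof.
move=> a_ge q_le Q_lt_rho.
exists (\matrix_(h < m, l < k) (a h ^+ l.+1)^-1 *m \matrix_(l < k, j < n) q j ^+ l).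
  exact: leq_trans (mxrankM_maxl _ _) (rank_leq_col _).
move=> h j; have Q_ge0 : 0 <= Q := le_trans (normr_ge0 _) (q_le j).
have rho_gt0 : 0 < rho := le_lt_trans Q_ge0 Q_lt_rho.
have a_gt0 : 0 < `|a h| := lt_le_trans rho_gt0 (a_ge h).
have aq_ge : rho - Q <= `|a h - q j|.
  exact: le_trans (lerB (a_ge h) (q_le j)) (lerB_dist _ _).
have aq_gt0 : 0 < `|a h - q j| by apply: lt_le_trans aq_ge; rewrite subr_gt0.
have a_neq0 : a h != 0 by rewrite -normr_gt0.
have a_neq_q : a h != q j by rewrite -subr_eq0 -normr_gt0.
rewrite (invfB_geometric k a_neq0 a_neq_q).
have -> : (\matrix_(h < m, l < k) (a h ^+ l.+1)^-1 *m \matrix_(l < k, j < n) q j ^+ l) h j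
    = \sum_(l < k) q j ^+ l / a h ^+ l.+1.
  by rewrite !mxE; apply: eq_bigr => l _; rewrite !mxE mulrC.
rewrite addrC addKr normrM normfV normrX normrM normfV.
have ratio_le : `|q j| / `|a h| <= Q / rho.
  by rewrite ler_pM ?invr_ge0 // lef_pV2 ?posrE.
apply: ler_pM; rewrite ?exprn_ge0 ?divr_ge0 ?invr_ge0 //.
  by apply: lerXn2r; rewrite // nnegrE divr_ge0 // ltW.
by rewrite lef_pV2 ?posrE ?subr_gt0.
Qed.

Section TrigSeries.
Variable R : realType.
Local Open Scope complex_scope.

Lemma sum_cos_sin_le (b theta : nat -> R) (I : seq nat) : (forall j, 0 <= b j) ->
  (\sum_(j <- I) b j * cos (theta j)) ^+ 2 + (\sum_(j <- I) b j * sin (theta j)) ^+ 2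
    <= (\sum_(j <- I) b j) ^+ 2.
Proof.
move=> b_ge0; pose z := \sum_(j <- I) (b j)%:C * (cos (theta j) +i* sin (theta j)).
have Re_z : complex.Re z = \sum_(j <- I) b j * cos (theta j).
  by rewrite raddf_sum; apply: eq_bigr => j _ /=; rewrite !mul0r subr0.
have Im_z : complex.Im z = \sum_(j <- I) b j * sin (theta j).
  by rewrite raddf_sum; apply: eq_bigr => j _ /=; rewrite !mul0r addr0.
have z_le : `|z| <= (\sum_(j <- I) b j)%:C.
  rewrite rmorph_sum; apply: le_trans (ler_norm_sum _ _ _) _; apply: ler_sum => j _.
  have unit_norm : `|cos (theta j) +i* sin (theta j)| = 1.
    by rewrite normc_def /= cos2Dsin2 sqrtr1.
  by rewrite normrM unit_norm mulr1 ger0_norm ?ler0c.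
rewrite -Re_z -Im_z -lecR add_Re2_Im2 rmorphXn.
by apply: lerXn2r; rewrite // nnegrE ler0c sumr_ge0.
Qed.

Lemma series_le_ssum (b : nat -> R) N : (forall j, 0 <= b j) -> cvgn (series b) ->
  series b N <= ssum b.
Proof.
move=> b_ge0 /(nondecreasing_cvgn_le _); apply.
exact: nondecreasing_series (fun j _ _ => b_ge0 j).
Qed.

Lemma cvgn_series_mul_bounded (b c : nat -> R) : (forall j, 0 <= b j) ->
  (forall j, `|c j| <= 1) -> cvgn (series b) -> cvgn (series (fun j => b j * c j)).
Proof.
move=> b_ge0 c_le1 b_cvg; apply: normed_cvg.
apply: (series_le_cvg _ b_ge0) => // j /=; first exact: normr_ge0.
by rewrite normrM ger0_norm //; apply: ler_piMr.
Qed.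

Lemma ssum_cos_sin_tail_le (b : nat -> R) (t : R) :
  (forall j, 0 <= b j) -> cvgn (series b) ->
  (ssum (fun j => b j * cos (j%:R * t)) - b 0%N) ^+ 2
    + (ssum (fun j => b j * sin (j%:R * t))) ^+ 2 <= (ssum b - b 0%N) ^+ 2.
Proof.
move=> b_ge0 b_cvg.
set bc := fun j => b j * cos (j%:R * t); set bs := fun j => b j * sin (j%:R * t).
have bc_cvg : cvgn (series bc) by apply: cvgn_series_mul_bounded => // j; exact: cos_max.
have bs_cvg : cvgn (series bs) by apply: cvgn_series_mul_bounded => // j; exact: sin_max.
have sqr_cvg : (fun N => (series bc N - b 0%N) * (series bc N - b 0%N)
    + series bs N * series bs N) @ \oo
    --> (ssum bc - b 0%N) * (ssum bc - b 0%N) + ssum bs * ssum bs.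
  by apply: cvgD; apply: cvgM => //; apply: cvgB => //; exact: cvg_cst.
rewrite (expr2 (ssum bc - _)) (expr2 (ssum bs)); apply: (cvgr_to_le sqr_cvg).
exists 1%N => // N /= N_gt0; rewrite -!expr2.
have tail u : series u N = u 0%N + \sum_(1 <= j < N) u j by rewrite /series /= big_ltn.
rewrite !tail {1}/bc {1}/bs mul0r cos0 sin0 mulr1 mulr0 add0r addrAC subrr add0r.
apply: le_trans (sum_cos_sin_le (fun j => j%:R * t) _ b_ge0) _.
have := series_le_ssum N b_ge0 b_cvg; rewrite tail => S_le.
have sum_ge0 : 0 <= \sum_(1 <= j < N) b j by exact: sumr_ge0.
by apply: lerXn2r; rewrite ?nnegrE; lra.
Qed.

End TrigSeries.

Section CauchyMatrix.
Variables (R : realType) (p : nat -> R) (r : R).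
Hypotheses (p_ge0 : forall j, 0 <= p j) (r_ge0 : 0 <= r).
Hypothesis Pr_cvg : cvgn (series (fun j => p j * r ^+ j)).
Local Open Scope complex_scope.

Let pr_ge0 j : 0 <= p j * r ^+ j. Proof. by rewrite mulr_ge0 ?exprn_ge0. Qed.

Lemma Pser_ge_head : p 0%N <= Pser p r.
Proof.
by have := series_le_ssum 1 pr_ge0 Pr_cvg; rewrite /series /= big_nat1 expr0 mulr1.
Qed.

Lemma norm_PserC_sub_head t : `|PserC p r t - (p 0%N)%:C| <= (Pser p r - p 0%N)%:C.
Proof.
have := ssum_cos_sin_tail_le t pr_ge0 Pr_cvg; rewrite expr0 mulr1 => sqr_le.
rewrite /PserC normc_def /= lecR subr0.
rewrite -(ger0_norm (_ : 0 <= Pser p r - p 0%N)) ?subr_ge0 ?Pser_ge_head //.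
by rewrite -sqrtr_sqr ler_sqrt ?sqr_ge0.
Qed.

Lemma norm_xi_sub_head_ge n h : (r - p 0%N)%:C <= `|r%:C * xi R n h - (p 0%N)%:C|.
Proof.
have xi_norm : `|xi R n h| = 1 by rewrite normc_def /= cos2Dsin2 sqrtr1.
apply: le_trans (lerB_dist _ _).
by rewrite normrM xi_norm mulr1 !ger0_norm ?ler0c // rmorphB.
Qed.

Lemma sigma_CPr_le n k : Pser p r < r -> (k < n)%N ->
  sigma (CPr p r n) k
    <= n%:R * (((Pser p r - p 0%N) / (r - p 0%N)) ^+ k / (r - Pser p r)).
Proof.
move=> Pr_lt_r kn; set Q := Pser p r - p 0%N; set rho := r - p 0%N.
have -> : r - Pser p r = rho - Q by rewrite opprB addrA subrK.
have Q_lt_rho : Q%:C < rho%:C by rewrite ltcR ltrD2r.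
have [B rankB B_approx] := @cauchy_mx_low_rank _ n n k
  (fun h => r%:C * xi R n h.+1 - (p 0%N)%:C) (fun j => PserC p r (ang R n j.+1) - (p 0%N)%:C)
  rho%:C Q%:C (fun h => norm_xi_sub_head_ge n h.+1) (fun j => norm_PserC_sub_head _) Q_lt_rho.
apply: (sigma_le_rank_approx kn rankB) => h j.
have -> : CPr p r n h j
    = (r%:C * xi R n h.+1 - (p 0%N)%:C - (PserC p r (ang R n j.+1) - (p 0%N)%:C))^-1.
  by rewrite mxE opprB addrA subrK.
rewrite rmorphM rmorphXn rmorphM !(fmorphV (real_complex R)) (rmorphB _ rho Q).
exact: B_approx.
Qed.

End CauchyMatrix.

Unset Implicit Arguments.
Theorem lemma3p4 (R : realType) (n : nat) (p : nat -> R)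
  (hp : forall j, 0 <= p j)
  (hP1 : cvg (series p @ \oo) /\ ssum p = 1)
  (hdP : cvg (series (fun j => j%:R * p j) @ \oo) /\
         0 < ssum (fun j => j%:R * p j) < 1)
  (r : R) (hr : 1 < r)
  (hPr : cvg (series (fun j => p j * r ^+ j) @ \oo))
  (hrP : Pser p r < r)
  (k : nat) (hk : (1 <= k <= n - 1)%N) :
  let theta := (Pser p r - p 0%N) / (r - p 0%N) in
  sigma (CPr p r n) k <= theta ^+ k * n%:R / ((1 - theta) * (r - p 0%N)).
Proof.
have kn : (k < n)%N by lia.
have r_ge0 : 0 <= r by apply: ltW; apply: lt_trans hr.
cbv zeta; apply: le_trans (sigma_CPr_le hp r_ge0 hPr hrP kn) _.
set theta := (Pser p r - p 0%N) / (r - p 0%N); set rho := r - p 0%N.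
have rho_gt0 : 0 < rho by rewrite subr_gt0; apply: le_lt_trans (Pser_ge_head hp r_ge0 hPr) hrP.
have -> : (1 - theta) * rho = r - Pser p r.
  by rewrite mulrBl mul1r divfK ?gt_eqF // opprB addrA subrK.
by rewrite mulrA (mulrC (theta ^+ k)).
Qed.
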